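(* Let $K$ be a field of characteristic $p>0$ such that $K/k$ is a finitely generated field extension, where $k=\bigcap_{n\ge0}K^{p^n}$. Let $W_\bullet$ be a power tower on $K$. Then \[\dim_{W_1}(K)\ge\dim_{W_2}(W_1)\ge\cdots\ge\dim_{W_n}(W_{n-1})\ge\cdots\ge0.\]
   Context: A power tower on $K$ is a sequence of subfields $W_0,W_1,W_2,\ldots$ of $K$ such that $W_j=W_i\cdot K^{p^j}$ whenever $j\le i$, where $\cdot$ denotes the compositum in $K$. *)

From HB Require Import structures.
From mathcomp Require Import all_boot all_order all_algebra.
Set Implicit Arguments. Unset Strict Implicit. Unset Printing Implicit Defensive.
Import GRing.Theory.
Local Open Scope ring_scope.

Definition is_subfield (K : fieldType) (S : K -> Prop) : Prop :=
  [/\ S 0, S 1,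
      (forall x y, S x -> S y -> S (x - y)),
      (forall x y, S x -> S y -> S (x * y)) &
      (forall x, S x -> S x^-1)].

Definition gen_subfield (K : fieldType) (A : K -> Prop) : K -> Prop :=
  fun x => forall S, is_subfield S -> (forall y, A y -> S y) -> S x.

Definition compositum (K : fieldType) (A B : K -> Prop) : K -> Prop :=
  gen_subfield (fun x => A x \/ B x).

Definition frob_pow_image (K : fieldType) (p n : nat) : K -> Prop :=
  fun x => exists y : K, x = y ^+ (p ^ n).

Definition perfect_core (K : fieldType) (p : nat) : K -> Prop :=
  fun x => forall n, frob_pow_image p n x.

Definition fin_gen_over (K : fieldType) (F : K -> Prop) : Prop :=
  exists s : seq K, forall x : K, gen_subfield (fun y => F y \/ y \in s) x.

Definition power_tower (K : fieldType) (p : nat) (W : nat -> K -> Prop) : Prop :=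
  (forall i, is_subfield (W i)) /\
  (forall i j, (j <= i)%N ->
     forall x, W j x <-> compositum (W i) (frob_pow_image p j) x).

Definition has_dim (K : fieldType) (W V : K -> Prop) (d : nat) : Prop :=
  exists b : 'I_d -> K,
    [/\ (forall i, V (b i)),
        (forall c : 'I_d -> K, (forall i, W (c i)) ->
            \sum_i c i * b i = 0 -> forall i, c i = 0) &
        (forall x, V x -> exists c : 'I_d -> K,
            (forall i, W (c i)) /\ x = \sum_i c i * b i)].

From HB Require Import structures.
From mathcomp Require Import all_boot all_order all_algebra.
From Stdlib Require Import Classical.
Set Implicit Arguments. Unset Strict Implicit. Unset Printing Implicit Defensive.
Import GRing.Theory.
Local Open Scope ring_scope.

(* If b_1, ..., b_d span W_n over W_{n+1}, then the Frobenius images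
   b_1^p, ..., b_d^p span W_{n+1} over W_{n+2}: the Frobenius maps W_n into
   W_{n+1}, so the W_{n+2}-span of the b_i^p contains W_{n+2} and
   K^{p^{n+1}} = (K^{p^n})^p, and it is a field because it is a ring whose
   p-th powers lie in W_{n+2}; as W_{n+1} = W_{n+2} . K^{p^{n+1}}, it is all
   of W_{n+1}. Extracting a basis from a spanning family only shrinks it, so
   a basis of W_n over W_{n+1} yields a spanning family, hence a basis, of
   W_{n+1} over W_{n+2} that is no larger. A finite spanning family exists at
   every level: K is spanned over W_1, which contains K^p and hence k, by the
   monomials with all exponents < p in finitely many generators of K/k. *)

Section Subfield.
Variables (K : fieldType) (S : K -> Prop).
Hypothesis subS : is_subfield S.

Lemma subfield0 : S 0. Proof. by case: subS. Qed.
Lemma subfield1 : S 1. Proof. by case: subS. Qed.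

Lemma subfieldB x y : S x -> S y -> S (x - y).
Proof. by case: subS => _ _ closedB _ _; apply: closedB. Qed.

Lemma subfieldM x y : S x -> S y -> S (x * y).
Proof. by case: subS => _ _ _ closedM _; apply: closedM. Qed.

Lemma subfieldV x : S x -> S x^-1.
Proof. by case: subS => _ _ _ _ closedV; apply: closedV. Qed.

Lemma subfieldN x : S x -> S (- x).
Proof. by move=> Sx; rewrite -sub0r; apply: subfieldB => //; apply: subfield0. Qed.

Lemma subfieldD x y : S x -> S y -> S (x + y).
Proof. by move=> Sx Sy; rewrite -(opprK y); apply: subfieldB => //; apply: subfieldN. Qed.

Lemma subfieldX x n : S x -> S (x ^+ n).
Proof.
move=> Sx; elim: n => [|n IHn]; first by rewrite expr0; apply: subfield1.
by rewrite exprS; apply: subfieldM.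
Qed.

Lemma subfield_sum (J : Type) (r : seq J) (P : pred J) (f : J -> K) :
  (forall j, P j -> S (f j)) -> S (\sum_(j <- r | P j) f j).
Proof. by move=> Sf; apply: big_ind => //; [apply: subfield0 | apply: subfieldD]. Qed.

End Subfield.

Section Compositum.
Variables (K : fieldType) (A B : K -> Prop).

Lemma compositum_l x : A x -> compositum A B x.
Proof. by move=> Ax S _ AB_S; apply: AB_S; left. Qed.

Lemma compositum_r x : B x -> compositum A B x.
Proof. by move=> Bx S _ AB_S; apply: AB_S; right. Qed.

Lemma compositum_min (S : K -> Prop) : is_subfield S ->
  (forall x, A x -> S x) -> (forall x, B x -> S x) ->
  forall x, compositum A B x -> S x.
Proof. by move=> subS AS BS x; apply; last by move=> y [/AS | /BS]. Qed.

End Compositum.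

Section LinearSpan.
Variables (K : fieldType) (F : K -> Prop).
Hypothesis subF : is_subfield F.

Definition lin_span (I : finType) (b : I -> K) (x : K) : Prop :=
  exists c : I -> K, (forall i, F (c i)) /\ x = \sum_i c i * b i.

Definition spans (V : K -> Prop) (I : finType) (b : I -> K) : Prop :=
  (forall i, V (b i)) /\ (forall x, V x -> lin_span b x).

Variables (I : finType) (b : I -> K).

Lemma lin_span0 : lin_span b 0.
Proof.
exists (fun=> 0); split=> [i|]; first exact: subfield0.
by rewrite big1 // => i _; rewrite mul0r.
Qed.

Lemma lin_spanD x y : lin_span b x -> lin_span b y -> lin_span b (x + y).
Proof.
move=> [c [Fc ->]] [e [Fe ->]]; exists (fun i => c i + e i).
split=> [i|]; first exact: subfieldD.
by rewrite -big_split; apply: eq_bigr => i _; rewrite mulrDl.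
Qed.

Lemma lin_spanZ a x : F a -> lin_span b x -> lin_span b (a * x).
Proof.
move=> Fa [c [Fc ->]]; exists (fun i => a * c i).
split=> [i|]; first exact: subfieldM.
by rewrite mulr_sumr; apply: eq_bigr => i _; rewrite mulrA.
Qed.

Lemma lin_spanN x : lin_span b x -> lin_span b (- x).
Proof.
by rewrite -mulN1r; apply: lin_spanZ; apply: subfieldN => //; apply: subfield1.
Qed.

Lemma lin_span_gen i : lin_span b (b i).
Proof.
exists (fun j => (j == i)%:R); split=> [j|].
  by case: (j == i); [apply: subfield1 | apply: subfield0].
rewrite (bigD1 i) //= eqxx mul1r big1 ?addr0 // => j /negbTE->.
by rewrite mul0r.
Qed.

Lemma lin_span_sum (J : Type) (r : seq J) (P : pred J) (f : J -> K) :
  (forall j, P j -> lin_span b (f j)) -> lin_span b (\sum_(j <- r | P j) f j).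
Proof. by move=> spanf; apply: big_ind => //; [apply: lin_span0 | apply: lin_spanD]. Qed.

Lemma lin_span_base a : lin_span b 1 -> F a -> lin_span b a.
Proof. by move=> span1 Fa; rewrite -(mulr1 a); apply: lin_spanZ. Qed.

Section MulClosed.
Hypothesis span_genM : forall k l, lin_span b (b k * b l).

Lemma lin_spanM x y : lin_span b x -> lin_span b y -> lin_span b (x * y).
Proof.
move=> [c [Fc ->]] [e [Fe ->]]; rewrite mulr_suml; apply: lin_span_sum => k _.
rewrite mulr_sumr; apply: lin_span_sum => l _; rewrite mulrACA.
exact: lin_spanZ (subfieldM subF (Fc k) (Fe l)) (span_genM k l).
Qed.

(* Inverses come for free: x^-1 = (x^p)^-1 * x^(p-1) with (x^p)^-1 in F. *)
Lemma lin_span_subfield p : (0 < p)%N -> lin_span b 1 ->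
  (forall x, lin_span b x -> F (x ^+ p)) -> is_subfield (lin_span b).
Proof.
move=> p_gt0 span1 Fexpp; split=> //.
- exact: lin_span0.
- by move=> x y spanx spany; apply: lin_spanD => //; apply: lin_spanN.
- exact: lin_spanM.
move=> x spanx; have [->|x_neq0] := eqVneq x 0; first by rewrite invr0; apply: lin_span0.
have spanX n : lin_span b (x ^+ n).
  by elim: n => [|n IHn]; rewrite ?expr0 // exprS; apply: lin_spanM.
case: p p_gt0 Fexpp => // q _ Fexpp.
have -> : x^-1 = (x ^+ q.+1)^-1 * x ^+ q by rewrite exprS invfM mulfVK ?expf_neq0.
exact: lin_spanZ (subfieldV subF (Fexpp x spanx)) (spanX q).
Qed.

End MulClosed.

Lemma lin_span_enum_val x :
  lin_span b x -> lin_span (fun i : 'I_#|I| => b (enum_val i)) x.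
Proof.
move=> [c [Fc ->]]; exists (fun i => c (enum_val i)); split=> //.
by rewrite (big_enum_val (A := predT)).
Qed.

End LinearSpan.

Lemma has_dim_spans (K : fieldType) (F V : K -> Prop) d :
  has_dim F V d -> exists b : 'I_d -> K, spans F V b.
Proof. by move=> [b [Vb _ spanV]]; exists b. Qed.

(* A dependent family loses one member while still spanning, until it is free. *)
Lemma has_dim_of_spans (K : fieldType) (F V : K -> Prop) : is_subfield F ->
  forall d (b : 'I_d -> K), spans F V b -> exists2 d', (d' <= d)%N & has_dim F V d'.
Proof.
move=> subF; elim=> [|d IHd] b [Vb spanV].
  by exists 0%N => //; exists b; split=> // c _ _ [].
have [[c [Fc relc [i ci_neq0]]]|free] := classic (exists c : 'I_d.+1 -> K,
    [/\ forall i, F (c i), \sum_i c i * b i = 0 & exists i, c i != 0]); last first.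
  exists d.+1 => //; exists b; split=> // c Fc relc i.
  by apply: NNPP => /eqP ci_neq0; apply: free; exists c; split=> //; exists i.
pose b' (j : 'I_d) := b (lift i j).
have span_bi : lin_span F b' (b i).
  move: relc; rewrite (bigD1_ord i) //= => /eqP; rewrite addr_eq0 => /eqP relc.
  rewrite -[b i](mulKf ci_neq0) relc.
  apply: (lin_spanZ subF (subfieldV subF (Fc i))); apply: (lin_spanN subF).
  by apply: (lin_span_sum subF) => j _; apply: (lin_spanZ subF (Fc _) (lin_span_gen subF _ _)).
have [|d' le_d'd dimV] := IHd b'; last by exists d' => //; apply: leqW.
split=> [j|x /spanV [e [Fe ->]]]; first exact: Vb.
rewrite (bigD1_ord i) //=; apply: (lin_spanD subF); first exact: lin_spanZ.
by apply: (lin_span_sum subF) => j _; apply: (lin_spanZ subF (Fe _) (lin_span_gen subF _ _)).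
Qed.

Section FiniteGeneration.
Variables (K : fieldType) (p : nat) (F : K -> Prop).
Hypotheses (p_gt0 : (0 < p)%N) (subF : is_subfield F) (F_expp : forall y, F (y ^+ p)).

(* The family: monomials in the elements of s with all exponents < p. *)
Lemma mul_closed_span_of_seq (s : seq K) :
  exists (I : finType) (b : I -> K),
    [/\ lin_span F b 1, (forall a, a \in s -> lin_span F b a)
      & forall k l, lin_span F b (b k * b l)].
Proof.
elim: s => [|a s [I [b [span1 span_s span_genM]]]].
  have span1 := lin_span_gen subF (fun=> 1 : K) tt.
  by exists unit, (fun=> 1); split=> // k l; rewrite mulr1.
pose b' (ij : 'I_p * I) := a ^+ ij.1 * b ij.2.
have span_monomial n y : lin_span F b y -> lin_span F b' (a ^+ n * y).
  move=> spany; rewrite (divn_eq n p) exprD mulnC exprM -mulrA mulrCA.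
  have [c [Fc ->]] : lin_span F b ((a ^+ p) ^+ (n %/ p) * y).
    by apply: (lin_spanZ subF _ spany); apply: (subfieldX subF).
  rewrite mulr_sumr; apply: (lin_span_sum subF) => j _; rewrite mulrCA.
  apply: (lin_spanZ subF (Fc j)).
  exact: (lin_span_gen subF b' (Ordinal (ltn_pmod n p_gt0), j)).
exists ('I_p * I)%type, b'; split.
- by rewrite -[1]mulr1 -{1}(expr0 a); apply: span_monomial.
- move=> x; rewrite in_cons => /orP [/eqP ->|s_x].
    by rewrite -[a]mulr1 -{1}(expr1 a); apply: span_monomial.
  by rewrite -[x]mul1r -(expr0 a); apply: span_monomial; apply: span_s.
- by move=> [i j] [k l]; rewrite /b' /= mulrACA -exprD; apply: span_monomial.
Qed.

Lemma lin_span_full_of_fin_gen : fin_gen_over (perfect_core (K:=K) p) ->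
  exists d (b : 'I_d -> K), forall x, lin_span F b x.
Proof.
move=> [s gen_s].
have [I [b [span1 span_s span_genM]]] := mul_closed_span_of_seq s.
have sub_span : is_subfield (lin_span F b).
  by apply: (lin_span_subfield subF span_genM p_gt0) => // x _.
exists #|I|, (fun i => b (enum_val i)) => x; apply: lin_span_enum_val.
apply: (gen_s x _ sub_span) => y [k_y|]; last exact: span_s.
apply: (lin_span_base subF span1); have [z ->] := k_y 1%N.
by rewrite expn1.
Qed.

End FiniteGeneration.

Section Frobenius.
Variables (K : fieldType) (p : nat).
Hypothesis charK : p \in [pchar K].

Lemma pchar_gt0 : (0 < p)%N.
Proof. exact: prime_gt0 (pcharf_prime charK). Qed.

Lemma frob_preimage_subfield (S : K -> Prop) :
  is_subfield S -> is_subfield (fun y => S (y ^+ p)).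
Proof.
move=> subS; split.
- by rewrite expr0n gtn_eqF ?pchar_gt0 //; apply: subfield0.
- by rewrite expr1n; apply: subfield1.
- by move=> x y Sx Sy; rewrite -!(pFrobenius_autE charK) rmorphB; apply: subfieldB.
- by move=> x y Sx Sy; rewrite exprMn; apply: subfieldM.
- by move=> x Sx; rewrite exprVn; apply: subfieldV.
Qed.

Lemma lin_span_frob (F F' : K -> Prop) (I : finType) (b : I -> K) x :
  (forall c, F c -> F' (c ^+ p)) ->
  lin_span F b x -> lin_span F' (fun i => b i ^+ p) (x ^+ p).
Proof.
move=> F_F' [c [Fc ->]]; exists (fun i => c i ^+ p); split=> [i|]; first exact: F_F'.
rewrite -(pFrobenius_autE charK) rmorph_sum; apply: eq_bigr => i _.
by rewrite rmorphM /= !pFrobenius_autE.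
Qed.

End Frobenius.

Section PowerTower.
Variables (K : fieldType) (p : nat) (W : nat -> K -> Prop).
Hypotheses (charK : p \in [pchar K]) (tower : power_tower p W).

Lemma tower_subfield i : is_subfield (W i). Proof. exact: tower.1. Qed.

Lemma tower_subS i x : W i.+1 x -> W i x.
Proof. by move=> Wx; apply/(tower.2 i.+1 i (leqnSn i) x); apply: compositum_l. Qed.

Lemma tower_frob_image i x : frob_pow_image p i x -> W i x.
Proof. by move=> Kx; apply/(tower.2 i i (leqnn i) x); apply: compositum_r. Qed.

Lemma tower0 x : W 0 x.
Proof. by apply: tower_frob_image; exists x; rewrite expn0 expr1. Qed.

Lemma tower_expp i x : W i x -> W i.+1 (x ^+ p).
Proof.
move=> /(tower.2 i.+1 i (leqnSn i) x); apply: (compositum_min (S := fun y => W i.+1 (y ^+ p))).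
- exact/(frob_preimage_subfield charK)/tower_subfield.
- by move=> y; apply: (subfieldX (tower_subfield i.+1)).
- by move=> _ [z ->]; apply: tower_frob_image; exists z; rewrite -exprM expnSr.
Qed.

Lemma spans_frob n d (b : 'I_d -> K) :
  spans (W n.+1) (W n) b -> spans (W n.+2) (W n.+1) (fun i => b i ^+ p).
Proof.
move=> [Wb spanW]; split=> [i|x]; first exact: tower_expp.
set bp := fun i => b i ^+ p.
have span_expp y : W n y -> lin_span (W n.+2) bp (y ^+ p).
  by move=> /spanW; apply: lin_span_frob => //; apply: tower_expp.
have span1 : lin_span (W n.+2) bp 1.
  by rewrite -(expr1n _ p); apply/span_expp/(subfield1 (tower_subfield n)).
have span_genM k l : lin_span (W n.+2) bp (bp k * bp l).
  by rewrite /bp -exprMn; apply/span_expp/(subfieldM (tower_subfield n)).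
have sub_span : is_subfield (lin_span (W n.+2) bp).
  apply: (lin_span_subfield (tower_subfield n.+2) span_genM (pchar_gt0 charK) span1).
  move=> y [c [Wc ->]]; apply: tower_expp.
  apply: (subfield_sum (tower_subfield n.+1)) => i _.
  exact: (subfieldM (tower_subfield n.+1) (tower_subS (Wc i)) (tower_expp (Wb i))).
move=> /(tower.2 n.+2 n.+1 (leqnSn _) x); apply: (compositum_min sub_span).
- by move=> y; apply: (lin_span_base (tower_subfield n.+2) span1).
- move=> _ [z ->]; rewrite expnSr exprM; apply: span_expp.
  by apply: tower_frob_image; exists z.
Qed.

Lemma tower_spans : fin_gen_over (perfect_core (K:=K) p) ->
  forall n, exists d (b : 'I_d -> K), spans (W n.+1) (W n) b.
Proof.
move=> fin_gen; elim=> [|n [d [b spanb]]]; last by exists d, (fun i => b i ^+ p); apply: spans_frob.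
have W1_expp y : W 1 (y ^+ p) by apply: tower_frob_image; exists y; rewrite expn1.
have [d [b spanK]] :=
  lin_span_full_of_fin_gen (pchar_gt0 charK) (tower_subfield 1) W1_expp fin_gen.
by exists d, b; split=> [i|x _]; [apply: tower0 | apply: spanK].
Qed.

End PowerTower.

Theorem mainTheorem7 (K : fieldType) (p : nat) (W : nat -> K -> Prop) :
  (p \in [pchar K])%R ->
  fin_gen_over (perfect_core (K:=K) p) ->
  power_tower p W ->
  forall n : nat, exists d1 d2 : nat,
    [/\ has_dim (W n.+1) (W n) d1,
        has_dim (W n.+2) (W n.+1) d2 &
        (d2 <= d1)%N].
Proof.
move=> charK fin_gen tower n.
have [d [b spanb]] := tower_spans charK tower fin_gen n.
have [d1 _ dim1] := has_dim_of_spans (tower_subfield tower n.+1) spanb.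
have [b1 /(spans_frob charK tower) spanb1p] := has_dim_spans dim1.
have [d2 le_d2d1 dim2] := has_dim_of_spans (tower_subfield tower n.+2) spanb1p.
by exists d1, d2.
Qed.
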